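(* For all integers $k\ge1$ and $d\ge1$, $M_k(d)\ge M'_k(d)$, where \[M'_k(d):=\max\Big\{\prod_{i=1}^s m_{k_i}(d_i)\ :\ s\ge1,\ \sum_{i=1}^s k_i=k,\ \sum_{i=1}^s d_i=d\Big\},\] the maximum taken over positive integers $k_i$ and nonnegative integers $d_i$.
   Context: A set is separated if any two distinct points are at distance at least $1$. $m_k(d)$ is the maximum cardinality of a set in $\mathbb{R}^d$ determining at most $k$ distinct distances ($m_k(0)=1$). For $\varepsilon>0$, a separated set $P$ is an $\varepsilon$-nearly $k$-distance set (with distances $1\le t_1<\dots<t_k$) if $\|p_1-p_2\|\in\bigcup_{i=1}^k[t_i,t_i+\varepsilon]$ for all distinct $p_1,p_2\in P$. $M_k(d)$ is the largest $M$ such that for every $\varepsilon>0$ there exists an $\varepsilon$-nearly $k$-distance set in $\mathbb{R}^d$ of cardinality $M$. *)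

From Stdlib Require Import Rdefinitions.
From HB Require Import structures.
From mathcomp Require Import all_boot all_order all_algebra.
From mathcomp Require Import Rstruct.
Set Implicit Arguments. Unset Strict Implicit. Unset Printing Implicit Defensive.
Import Order.TTheory GRing.Theory Num.Theory.
Local Open Scope ring_scope.

Definition dist (d : nat) (x y : 'rV[R]_d) : R :=
  Num.sqrt (\sum_(i < d) (x ord0 i - y ord0 i) ^+ 2).

(* P (a finite set, given as a duplicate-free list) determines at most k
   distinct distances *)
Definition at_most_k_distance (k d : nat) (P : seq 'rV[R]_d) : Prop :=
  uniq P /\
  exists ts : seq R, (size ts <= k)%N /\
    forall p q, p \in P -> q \in P -> p != q -> dist p q \in ts.

Definition is_m (k d m : nat) : Prop :=
  (exists P : seq 'rV[R]_d, @at_most_k_distance k d P /\ size P = m) /\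
  (forall P : seq 'rV[R]_d, @at_most_k_distance k d P -> (size P <= m)%N).

Definition separated (d : nat) (P : seq 'rV[R]_d) : Prop :=
  uniq P /\ forall p q, p \in P -> q \in P -> p != q -> 1 <= dist p q.

Definition eps_nearly_k_distance (eps : R) (k d : nat) (P : seq 'rV[R]_d) : Prop :=
  separated P /\
  exists ts : seq R,
    size ts = k /\ sorted <%R ts /\ (forall t, t \in ts -> 1 <= t) /\
    forall p q, p \in P -> q \in P -> p != q ->
      exists2 t, t \in ts & t <= dist p q <= t + eps.

Definition nearly_admissible (k d M : nat) : Prop :=
  forall eps : R, 0 < eps ->
    exists P : seq 'rV[R]_d, @eps_nearly_k_distance eps k d P /\ size P = M.

Definition is_M (k d M : nat) : Prop :=
  nearly_admissible k d M /\ (forall M', nearly_admissible k d M' -> (M' <= M)%N).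

(* Put scaled copies of k_i-distance sets B_i in R^(d_i) side by side:
   P = {(l_1 y_1, ..., l_s y_s) | y_i in B_i}, with each scale l_i huge
   compared with the diameter D of the blocks before it.  If two points
   last differ in block i, where their B_i-components are at distance u,
   their distance is sqrt (D'^2 + (l_i u)^2) with D' <= D, which lies in
   [l_i u, l_i u + eps] as soon as l_i u >= D^2 / eps.  So the s blocks
   contribute at most k_1 + ... + k_s windows of width eps, all of them
   >= 1 if the scales are large enough, and |P| = |B_1| ... |B_s|.
   Padding the window positions with large dummy values makes exactly k
   sorted ones. *)

From Stdlib Require Import Rdefinitions.
From mathcomp Require Import all_boot all_order all_algebra.
From mathcomp Require Import Rstruct lra.
Set Implicit Arguments. Unset Strict Implicit. Unset Printing Implicit Defensive.
Import Order.TTheory GRing.Theory Num.Theory.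
Local Open Scope ring_scope.

Section Distance.
Variable d : nat.
Implicit Types x y : 'rV[R]_d.

Lemma sqr_dist x y :
  dist x y ^+ 2 = \sum_(i < d) (x ord0 i - y ord0 i) ^+ 2.
Proof. by rewrite sqr_sqrtr // sumr_ge0 // => i _; apply: sqr_ge0. Qed.

Lemma dist_ge0 x y : 0 <= dist x y.
Proof. exact: sqrtr_ge0. Qed.

Lemma distxx x : dist x x = 0.
Proof. by rewrite /dist big1 ?sqrtr0 // => i _; rewrite subrr expr0n. Qed.

Lemma dist_gt0 x y : x != y -> 0 < dist x y.
Proof.
apply: contraNT; rewrite -leNgt => dxy; apply/eqP/rowP => j.
have d0 : dist x y = 0 by apply/eqP; rewrite eq_le dxy dist_ge0.
have /eqP : dist x y ^+ 2 = 0 by rewrite d0 expr0n.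
rewrite sqr_dist psumr_eq0 => [/allP/(_ j (mem_index_enum j))|i _]; last exact: sqr_ge0.
by rewrite sqrf_eq0 subr_eq0 (ord1 ord0) => /eqP.
Qed.

Lemma distZ (l : R) x y : dist (l *: x) (l *: y) = `|l| * dist x y.
Proof.
rewrite /dist -sqrtr_sqr -sqrtrM ?sqr_ge0 // mulr_sumr.
by congr Num.sqrt; apply: eq_bigr => i _; rewrite !mxE -mulrBr exprMn.
Qed.

End Distance.

Lemma dist_row_mx a b (x x' : 'rV[R]_a) (y y' : 'rV[R]_b) :
  dist (row_mx x y) (row_mx x' y') = Num.sqrt (dist x x' ^+ 2 + dist y y' ^+ 2).
Proof.
rewrite !sqr_dist /dist big_split_ord /=.
by congr (Num.sqrt (_ + _)); apply: eq_bigr => i _; rewrite ?row_mxEl ?row_mxEr.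
Qed.

Lemma sqrtr_sqrD_bounds (w a e : R) : 0 <= w -> 0 <= e -> 0 <= a <= w * e ->
  w <= Num.sqrt (w ^+ 2 + a) <= w + e.
Proof.
move=> w0 e0 /andP[a0 awe]; rewrite -[X in X <= _ <= _]ger0_norm // -sqrtr_sqr.
rewrite -[w + e]ger0_norm ?addr_ge0 // -sqrtr_sqr !ler_sqrt ?addr_ge0 ?sqr_ge0 //.
rewrite lerDl a0 /=; nra.
Qed.

Lemma exists_ub_ge0 (s : seq R) : exists2 D, 0 <= D & forall v, v \in s -> v <= D.
Proof.
elim: s => [|a s [D D0 sD]]; first by exists 0.
exists (Num.max a D); first by rewrite le_max D0 orbT.
by move=> v; rewrite inE le_max => /predU1P[->|/sD ->]; rewrite ?lexx ?orbT.
Qed.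

Lemma exists_scale_ge (C : R) (s : seq R) : (forall u, u \in s -> 0 < u) ->
  exists2 l, 0 < l & forall u, u \in s -> C <= l * u.
Proof.
elim: s => [_|a s IH s_gt0]; first by exists 1.
have a0 : 0 < a by rewrite s_gt0 ?mem_head.
have [l l0 sl] : exists2 l, 0 < l & forall u, u \in s -> C <= l * u.
  by apply: IH => u su; rewrite s_gt0 // inE su orbT.
exists (Num.max l (C / a)); first by rewrite lt_max l0.
move=> u; rewrite inE => /predU1P[->|su].
  by rewrite -ler_pdivrMr // le_max lexx orbT.
apply: le_trans (sl u su) _; rewrite ler_wpM2r ?le_max ?lexx //.
by rewrite ltW ?s_gt0 // inE su orbT.
Qed.

Lemma uniq_ge1_extend n (T : seq R) : uniq T -> (forall t, t \in T -> 1 <= t) ->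
  exists T' : seq R, [/\ uniq T', size T' = (size T + n)%N,
    forall t, t \in T' -> 1 <= t & {subset T <= T'}].
Proof.
elim: n T => [|n IH] T uT T1; first by exists T; rewrite addn0; split.
have [M M0 TM] := exists_ub_ge0 T.
have fresh : M + 1 \notin T by apply/negP => /TM; lra.
have [|t|T' [uT' sT' T'1 sub]] := IH (M + 1 :: T); first by rewrite /= fresh uT.
  by rewrite inE => /predU1P[->|/T1//]; lra.
exists T'; split=> //; first by rewrite sT' addSnnS.
by move=> t tT; rewrite sub // inE tT orbT.
Qed.

Lemma sorted_ge1_extend k (T : seq R) : (size T <= k)%N ->
  (forall t, t \in T -> 1 <= t) ->
  exists ts : seq R, [/\ size ts = k, sorted <%R ts,
    forall t, t \in ts -> 1 <= t & {subset T <= ts}].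
Proof.
move=> sTk T1.
have uT1 t : t \in undup T -> 1 <= t by rewrite mem_undup => /T1.
have [T' [uT' sT' T'1 sub]] := uniq_ge1_extend (k - size (undup T)) (undup_uniq T) uT1.
exists (sort <=%O T'); split.
- by rewrite size_sort sT' subnKC // (leq_trans (size_undup T)).
- by rewrite sort_lt_sorted.
- by move=> t; rewrite mem_sort => /T'1.
- by move=> t tT; rewrite mem_sort sub ?mem_undup.
Qed.

Definition near_dists (eps : R) d (P : seq 'rV[R]_d) (T : seq R) : Prop :=
  forall p q, p \in P -> q \in P -> p != q ->
    exists2 t, t \in T & t <= dist p q <= t + eps.

Definition nearly_k_distance (eps : R) (k d : nat) (P : seq 'rV[R]_d) : Prop :=
  uniq P /\ exists T : seq R,
    [/\ (size T <= k)%N, forall t, t \in T -> 1 <= t & near_dists eps P T].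

Lemma eps_nearly_of_nearly eps k d (P : seq 'rV[R]_d) :
  nearly_k_distance eps k P -> eps_nearly_k_distance eps k P.
Proof.
move=> [uP [T [sTk T1 nPT]]].
have [ts [sts ts_sorted ts1 sub]] := sorted_ge1_extend sTk T1.
split.
  split=> // p q pP qP pq; have [t tT /andP[tpq _]] := nPT p q pP qP pq.
  exact: le_trans (T1 t tT) tpq.
exists ts; split=> //; split=> //; split=> // p q pP qP pq.
by have [t tT tpq] := nPT p q pP qP pq; exists t; rewrite ?sub.
Qed.

Lemma near_dists_row_mx eps a b (A : seq 'rV[R]_a) (B : seq 'rV[R]_b)
    (T U : seq R) (l D : R) :
  0 < eps -> 0 < l -> near_dists eps A T ->
  (forall x x', x \in A -> x' \in A -> dist x x' ^+ 2 <= D) ->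
  (forall y y', y \in B -> y' \in B -> y != y' -> dist y y' \in U) ->
  (forall u, u \in U -> D / eps <= l * u) ->
  near_dists eps [seq row_mx x (l *: y) | x <- A, y <- B]
    (T ++ [seq l * u | u <- U]).
Proof.
move=> eps0 l0 nAT AD BU Ul p q /allpairsP[[x y] [/= xA yB ->]].
move=> /allpairsP[[x' y'] [/= x'A y'B ->]] pq.
rewrite dist_row_mx !distZ ger0_norm ?ltW //.
have [eyy'|yy'] := eqVneq y y'.
  subst y'; have xx' : x != x' by apply: contraNneq _ pq => ->.
  have [t tT txx'] := nAT x x' xA x'A xx'.
  by exists t; rewrite ?mem_cat ?tT // distxx mulr0 expr0n addr0 sqrtr_sqr ger0_norm ?dist_ge0.
have yyU := BU y y' yB y'B yy'.
exists (l * dist y y'); first by rewrite mem_cat map_f ?orbT.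
have w0 : 0 <= l * dist y y' by rewrite mulr_ge0 ?dist_ge0 ?ltW.
rewrite addrC; apply: sqrtr_sqrD_bounds; rewrite ?sqr_ge0 ?(ltW eps0) //=.
by rewrite (le_trans (AD x x' xA x'A)) // -ler_pdivrMr ?Ul.
Qed.

Lemma nearly_k_distance_row_mx eps k k' a b (A : seq 'rV[R]_a) (B : seq 'rV[R]_b) :
  0 < eps -> nearly_k_distance eps k A -> at_most_k_distance k' B ->
  exists2 l : R, 0 < l &
    nearly_k_distance eps (k + k') [seq row_mx x (l *: y) | x <- A, y <- B].
Proof.
move=> eps0 [uA [T [sTk T1 nAT]]] [uB [U [sUk' BU]]].
pose U' := [seq u <- U | 0 < u].
have [D D0 AD] := exists_ub_ge0 [seq dist x x' ^+ 2 | x <- A, x' <- A].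
have De0 : 0 <= D / eps by rewrite divr_ge0 // ltW.
have [l l0 U'l] : exists2 l, 0 < l & forall u, u \in U' -> 1 + D / eps <= l * u.
  by apply: exists_scale_ge => u; rewrite mem_filter => /andP[].
exists l => //; split.
  apply: allpairs_uniq => // -[x y] [x' y'] _ _ /= /eq_row_mx[-> /scalerI].
  by rewrite gt_eqF // => /(_ isT) ->.
exists (T ++ [seq l * u | u <- U']); split.
- by rewrite size_cat size_map leq_add // size_filter (leq_trans (count_size _ _)).
- move=> t; rewrite mem_cat => /orP[/T1 //|/mapP[u /U'l ul ->]].
  by rewrite (le_trans _ ul) // lerDl.
apply: near_dists_row_mx => // [x x' xA x'A|y y' yB y'B yy'|u /U'l ul].
- by apply: AD; apply: (allpairs_f (fun x x' => dist x x' ^+ 2)).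
- by rewrite mem_filter dist_gt0 ?BU.
- by rewrite (le_trans _ ul) // lerDr.
Qed.

Lemma nearly_k_distance_big_row_mx eps s (ks ds ms : 'I_s -> nat) : 0 < eps ->
  (forall i, exists B : seq 'rV[R]_(ds i),
     at_most_k_distance (ks i) B /\ size B = ms i) ->
  exists2 P : seq 'rV[R]_(\sum_(i < s) ds i),
    nearly_k_distance eps (\sum_(i < s) ks i) P & size P = (\prod_(i < s) ms i)%N.
Proof.
move=> eps0; elim: s ks ds ms => [|s IH] ks ds ms Bs.
  rewrite !big_ord0; exists [:: 0] => //; split=> //; exists [::].
  by split=> // p q; rewrite !inE => /eqP-> /eqP->; rewrite eqxx.
have [P nP sP] := IH _ _ _ (fun i => Bs (widen_ord (leqnSn s) i)).
have [B [kB sB]] := Bs ord_max.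
have [l _ nPB] := nearly_k_distance_row_mx eps0 nP kB.
rewrite !big_ord_recr /=.
by exists [seq row_mx x (l *: y) | x <- P, y <- B]; rewrite ?size_allpairs ?sP ?sB.
Qed.

Theorem proposition1 (k d : nat) (hk : (1 <= k)%N) (hd : (1 <= d)%N)
  (s : nat) (hs : (1 <= s)%N) (ks ds ms : 'I_s -> nat)
  (hks : forall i, (1 <= ks i)%N)
  (hsumk : (\sum_(i < s) ks i)%N = k)
  (hsumd : (\sum_(i < s) ds i)%N = d)
  (hms : forall i, is_m (ks i) (ds i) (ms i)) :
  nearly_admissible k d (\prod_(i < s) ms i)%N /\
  (forall M, is_M k d M -> ((\prod_(i < s) ms i) <= M)%N).
Proof.
have adm : nearly_admissible k d (\prod_(i < s) ms i)%N.
  move=> eps eps0; subst k d.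
  have [P nP sP] := nearly_k_distance_big_row_mx eps0 (fun i => (hms i).1).
  by exists P; split=> //; apply: eps_nearly_of_nearly.
by split=> // M [_ maxM]; apply: maxM.
Qed.
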